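(* Let $g\ge2$ be an integer and let $k,d_1,d_2,d_3,\ell,m,n$ be positive integers with $1\le d_1,d_2,d_3\le g-1$, $\ell\le m\le n$ and $n\ge 2$, satisfying $$F_k=d_1\frac{g^\ell-1}{g-1}\cdot d_2\frac{g^m-1}{g-1}\cdot d_3\frac{g^n-1}{g-1}.$$ Then $$k<3n\frac{\log g}{\log\alpha}+2<10n\log g,$$ where $\alpha=(1+\sqrt5)/2$.
   Context: $(F_n)_{n\ge 0}$ is the Fibonacci sequence: $F_0=0$, $F_1=1$, $F_{n+2}=F_{n+1}+F_n$. $\log$ is the natural logarithm. *)

From Stdlib Require Import Reals Arith.
Open Scope R_scope.

Fixpoint fib (n : nat) : nat :=
  match n with
  | O => 0%nat
  | S O => 1%nat
  | S (S p as q) => (fib q + fib p)%nat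
  end.

Definition alpha : R := (1 + sqrt 5) / 2.

From Stdlib Require Import Reals Arith Lra Lia.
Open Scope R_scope.

(* Since [alpha ^ (k - 2) <= F_k], a Fibonacci number below [g ^ (3 n)] has index
   [k < 3 n log g / log alpha + 2]; and each factor [d (g^j - 1)/(g - 1)] is below
   [g ^ j <= g ^ n], so the product of the three repdigits is below [g ^ (3 n)].
   The second inequality only needs [log alpha > 2/5] and [log g >= log 2 > 1/2]. *)

Definition repdigit (g d j : nat) : R := INR d * (INR g ^ j - 1) / (INR g - 1).

Lemma alpha_gt_8_5 : 8 / 5 < alpha.
Proof.
  unfold alpha.
  assert (11 / 5 < sqrt 5).
  { rewrite <- (sqrt_square (11 / 5)) by lra. apply sqrt_lt_1; lra. }
  lra.
Qed.

Lemma alpha_sqr : alpha ^ 2 = alpha + 1.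
Proof.
  unfold alpha. assert (H5 := sqrt_sqrt 5 ltac:(lra)). nra.
Qed.

Lemma alpha_pow_le_fib (k : nat) : (1 <= k)%nat -> alpha ^ k <= alpha ^ 2 * INR (fib k).
Proof.
  assert (Ha := alpha_gt_8_5). assert (Hsq := alpha_sqr).
  assert (Hpair : forall j, alpha ^ S j <= alpha ^ 2 * INR (fib (S j)) /\
                            alpha ^ S (S j) <= alpha ^ 2 * INR (fib (S (S j)))).
  { induction j as [|j [IH1 IH2]].
    - simpl. nra.
    - split; [exact IH2|].
      change (fib (S (S (S j)))) with (fib (S (S j)) + fib (S j))%nat.
      rewrite plus_INR.
      replace (alpha ^ S (S (S j))) with (alpha ^ S (S j) + alpha ^ S j).
      + lra.
      + replace (S (S (S j))) with (2 + S j)%nat by lia.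
        rewrite pow_add, Hsq. simpl. ring. }
  intro Hk. destruct k as [|k]; [lia|]. apply Hpair.
Qed.

Lemma ln_alpha_gt_2_5 : 2 / 5 < ln alpha.
Proof.
  assert (Ha := alpha_gt_8_5).
  (* [exp 2 <= 9 < (8/5) ^ 5] *)
  assert (He : exp 2 < alpha ^ 5).
  { replace 2 with (1 + 1) by lra. rewrite exp_plus.
    assert (H1 := exp_le_3). assert (H0 := exp_pos 1).
    assert ((8 / 5) ^ 5 <= alpha ^ 5) by (apply pow_incr; lra).
    nra. }
  apply ln_increasing in He; [|apply exp_pos].
  rewrite ln_exp, ln_pow in He by lra.
  simpl INR in He. lra.
Qed.

Lemma pow_lt_ln_div (a b : R) (p : nat) :
  1 < a -> a ^ p < b -> INR p < ln b / ln a.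
Proof.
  intros Ha Hab.
  assert (Hlna : 0 < ln a) by (rewrite <- ln_1; apply ln_increasing; lra).
  apply ln_increasing in Hab; [|apply pow_lt; lra].
  rewrite ln_pow in Hab by lra.
  apply (Rmult_lt_reg_r (ln a)); [exact Hlna|].
  unfold Rdiv. rewrite Rmult_assoc, Rinv_l by lra. lra.
Qed.

Lemma repdigit_bounds (g d j : nat) :
  (2 <= g)%nat -> (1 <= d <= g - 1)%nat -> 0 <= repdigit g d j <= INR g ^ j - 1.
Proof.
  intros Hg Hd. unfold repdigit.
  assert (HG : 2 <= INR g) by (apply (le_INR 2); lia).
  assert (Hd1 : 1 <= INR d) by (apply (le_INR 1); lia).
  assert (Hdg : INR d <= INR g - 1).
  { change (INR d <= INR g - INR 1). rewrite <- minus_INR by lia. apply le_INR; lia. }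
  assert (Hp : 1 <= INR g ^ j) by (apply pow_R1_Rle; lra).
  split.
  - apply Rmult_le_pos; [nra|]. left; apply Rinv_0_lt_compat; lra.
  - unfold Rdiv. apply (Rmult_le_reg_r (INR g - 1)); [lra|].
    rewrite Rmult_assoc, Rinv_l by lra. nra.
Qed.

Lemma repdigit_product_lt (g d1 d2 d3 l m n : nat) :
  (2 <= g)%nat ->
  (1 <= d1 <= g - 1)%nat -> (1 <= d2 <= g - 1)%nat -> (1 <= d3 <= g - 1)%nat ->
  (l <= n)%nat -> (m <= n)%nat ->
  repdigit g d1 l * repdigit g d2 m * repdigit g d3 n < INR g ^ (3 * n).
Proof.
  intros Hg H1 H2 H3 Hl Hm.
  assert (HG : 2 <= INR g) by (apply (le_INR 2); lia).
  destruct (repdigit_bounds g d1 l Hg H1) as [A0 A1].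
  destruct (repdigit_bounds g d2 m Hg H2) as [B0 B1].
  destruct (repdigit_bounds g d3 n Hg H3) as [C0 C1].
  assert (Pl : INR g ^ l <= INR g ^ n) by (apply Rle_pow; lra || lia).
  assert (Pm : INR g ^ m <= INR g ^ n) by (apply Rle_pow; lra || lia).
  assert (AB : repdigit g d1 l * repdigit g d2 m <= INR g ^ n * INR g ^ n)
    by (apply Rmult_le_compat; lra).
  assert (0 <= repdigit g d1 l * repdigit g d2 m) by (apply Rmult_le_pos; lra).
  replace (3 * n)%nat with (n + n + n)%nat by lia.
  rewrite !pow_add. nra.
Qed.

Lemma index_bound_lt_10_n_ln (g n : nat) :
  (2 <= g)%nat -> (2 <= n)%nat ->
  3 * INR n * (ln (INR g) / ln alpha) + 2 < 10 * INR n * ln (INR g).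
Proof.
  intros Hg Hn.
  assert (HN : 2 <= INR n) by (apply (le_INR 2); lia).
  assert (Hln2 := ln_lt_2).
  assert (HlnG : ln 2 <= ln (INR g)).
  { assert (HG : 2 <= INR g) by (apply (le_INR 2); lia).
    destruct (Rle_lt_or_eq_dec _ _ HG) as [Hlt | <-]; [|lra].
    left; apply ln_increasing; lra. }
  assert (Hlna := ln_alpha_gt_2_5).
  assert (Hinv : / ln alpha < 5 / 2).
  { replace (5 / 2) with (/ (2 / 5)) by lra. apply Rinv_lt_contravar; nra. }
  assert (0 < 3 * INR n * ln (INR g)) by nra.
  unfold Rdiv. rewrite <- Rmult_assoc. nra.
Qed.

Theorem lemma3p1 (g k d1 d2 d3 l m n : nat) :
  (2 <= g)%nat ->
  (1 <= k)%nat -> (1 <= l)%nat ->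
  (1 <= d1 <= g - 1)%nat -> (1 <= d2 <= g - 1)%nat -> (1 <= d3 <= g - 1)%nat ->
  (l <= m)%nat -> (m <= n)%nat -> (2 <= n)%nat ->
  INR (fib k) =
    (INR d1 * (INR g ^ l - 1) / (INR g - 1)) *
    (INR d2 * (INR g ^ m - 1) / (INR g - 1)) *
    (INR d3 * (INR g ^ n - 1) / (INR g - 1)) ->
  INR k < 3 * INR n * (ln (INR g) / ln alpha) + 2 /\
  3 * INR n * (ln (INR g) / ln alpha) + 2 < 10 * INR n * ln (INR g).
Proof.
  intros Hg Hk _ H1 H2 H3 Hlm Hmn Hn HF.
  split; [|exact (index_bound_lt_10_n_ln g n Hg Hn)].
  change (INR (fib k) = repdigit g d1 l * repdigit g d2 m * repdigit g d3 n) in HF.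
  assert (HG : 2 <= INR g) by (apply (le_INR 2); lia).
  assert (Ha := alpha_gt_8_5).
  assert (Hfib : INR (fib k) < INR g ^ (3 * n))
    by (rewrite HF; apply repdigit_product_lt; lia).
  assert (Hpow : alpha ^ k < alpha ^ 2 * INR g ^ (3 * n)).
  { apply (Rle_lt_trans _ _ _ (alpha_pow_le_fib k Hk)).
    apply Rmult_lt_compat_l; [apply pow_lt; lra | exact Hfib]. }
  apply pow_lt_ln_div in Hpow; [|lra].
  rewrite ln_mult, !ln_pow, mult_INR in Hpow by (try apply pow_lt; lra).
  replace (3 * INR n * (ln (INR g) / ln alpha) + 2)
    with ((INR 2 * ln alpha + INR 3 * INR n * ln (INR g)) / ln alpha)
    by (simpl; field; assert (Hlna := ln_alpha_gt_2_5); lra).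
  exact Hpow.
Qed.
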